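(* In any history sequence of the Lazy Set algorithm, every state is normal (i.e. satisfies NS1–NS5 of the context).
   Context: Lazy Set algorithm. A fixed countably infinite set $A$ of addresses contains distinguished $\mathsf H,\mathsf T$. A state $S$ consists of: predicates $\mathrm{Active}^S,\mathrm{Marked}^S\subseteq A$; functions $\mathrm{Next}^S:A\to A\cup\{\bot\}$, $\mathrm{Val}^S:A\to\mathbb N\cup\{-1,\infty,\bot\}$, $\mathrm{LockedTo}^S:A\to\{\text{processes}\}\cup\{\bot\}$; for each process $P$ local variables $\mathrm{pred}_P,\mathrm{curr}_P,d_P\in A$, $x_P\in\mathbb N$, and a program counter $PC_P$. Code of process $P$ (line numbers are the $PC$ values): line 0: pick $x\in\mathbb N$ and go to 1.1, 2.1 or 3.1. Success condition $SC\equiv\neg\mathrm{Marked}(\mathrm{pred})\wedge\mathrm{Next}(\mathrm{pred})=\mathrm{curr}$. Procedure locate$(x)$, lines L1: $\mathrm{curr}:=\mathsf H$; L2: repeat; L3.1: $\mathrm{pred}:=\mathrm{curr}$; L3.2: $\mathrm{curr}:=\mathrm{Next}(\mathrm{curr})$; L4: until $\mathrm{Val}(\mathrm{curr})\ge x$; L5: return $(\mathrm{pred},\mathrm{curr})$ to the caller. ADD$(x)$: 1.1 $(\mathrm{pred},\mathrm{curr}):=$locate$(x)$; 1.2 lock pred; 1.3 if $\neg SC$ then unlock pred and return $f$; 1.4 if $\mathrm{Val}(\mathrm{curr})=x$ then unlock pred and return $1$; 1.5 activation: choose $a\notin\mathrm{Active}$, make it active with $\mathrm{Val}(a)=x$,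 $\mathrm{Next}(a)=\mathrm{curr}$, and set $\mathrm{Next}(\mathrm{pred}):=a$ (nothing else changes); 1.6 unlock pred, return $0$. REMOVE$(x)$: 2.1 $(\mathrm{pred},\mathrm{curr}):=$locate$(x)$; 2.2 lock pred; 2.3 if $\neg SC$ then unlock pred, return $f$; 2.4 if $\mathrm{Val}(\mathrm{curr})>x$ then unlock pred, return $0$; 2.5 lock curr, $d:=\mathrm{Next}(\mathrm{curr})$; 2.6 $\mathrm{Marked}(\mathrm{curr}):=$ true; 2.7 $\mathrm{Next}(\mathrm{pred}):=d$ (physical removal); 2.8 unlock curr and pred, return $1$. CONTAINS$(x)$: 3.1 $\mathrm{curr}:=\mathsf H$; 3.2 repeat; 3.3 $\mathrm{curr}:=\mathrm{Next}(\mathrm{curr})$; 3.4 until $\mathrm{Val}(\mathrm{curr})\ge x$; 3.5 return $1$ if $\mathrm{Val}(\mathrm{curr})=x$ else $0$. Returns set $PC_P:=0$. Each line is executed as an atomic step; a lock of address $a$ by $P$ is enabled only if $\mathrm{LockedTo}(a)=\bot$ and sets $\mathrm{LockedTo}(a)=P$; unlock sets it to $\bot$; the test at 1.3/2.3 reads $\mathrm{Marked}(\mathrm{pred})$ and $\mathrm{Next}(\mathrm{pred})$. Initial state: $\mathrm{Active}=\{\mathsf H,\mathsf T\}$, $\mathrm{Marked}=\emptyset$, $\mathrm{Next}(\mathsf H)=\mathsf T$, $\mathrm{Next}(\mathsf T)=\bot$, $\mathrm{Next}(a)=a$ otherwise, $\mathrm{Val}(\mathsf H)=-1$, $\mathrm{Val}(\mathsf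 T)=\infty$, $\mathrm{Val}=\bot$ otherwise, all unlocked, $\mathrm{pred}_P=\mathsf H$, $\mathrm{curr}_P=\mathsf T$, $PC_P=0$. A history sequence is $(S_0,e_0,S_1,\dots)$ with $S_0$ initial and each $(S_i,e_i,S_{i+1})$ a step of some process. A path is a sequence of distinct addresses $a_1,\dots,a_n$, $n>1$, with $a_i\ne\mathsf T$ and $\mathrm{Next}(a_i)=a_{i+1}$ for $i<n$; the main branch is the path from $\mathsf H$ to $\mathsf T$. $S$ is normal if for every process $P$ (writing pred, curr, $x$ for $\mathrm{pred}_P,\mathrm{curr}_P,x_P$): NS1: $\mathsf H,\mathsf T$ are active with $\mathrm{Val}(\mathsf H)=-1$, $\mathrm{Val}(\mathsf T)=\infty$; every active $a\notin\{\mathsf H,\mathsf T\}$ has $\mathrm{Val}(a)\in\mathbb N$; for active $a\ne\mathsf T$, $\mathrm{Next}(a)$ is active and $\mathrm{Val}(a)<\mathrm{Val}(\mathrm{Next}(a))$; pred and curr are active; there are finitely many active addresses; and the relation ''there is a path from $a$ to $b$'' on active addresses has no loops (a tree with root $\mathsf T$). NS2: $a$ is active iff $a$ is on the main branch or $\mathrm{Marked}(a)$. NS3: if $PC_P\in\{L2,L3.1\}$ then $\mathrm{Val}(\mathrm{curr})<x$; if $PC_P=L3.2$ then $\mathrm{pred}=\mathrm{curr}$ and $\mathrm{Val}(\mathrm{pred})<x$; if $PC_P=L4$ then $\mathrm{Val}(\mathrm{pred})<\mathrm{Val}(\mathrm{curr})$ and $\mathrm{Val}(\mathrm{pred})<x$;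 if $PC_P=L5$ then $\mathrm{Val}(\mathrm{pred})<x\le\mathrm{Val}(\mathrm{curr})$. NS4: if $PC_P\in\{1.2,1.3,1.4\}$ then $\mathrm{Val}(\mathrm{pred})<x\le\mathrm{Val}(\mathrm{curr})$; if $PC_P=1.5$ then $\mathrm{Val}(\mathrm{pred})<x<\mathrm{Val}(\mathrm{curr})$; if $PC_P\in\{1.3,\dots,1.6\}$ then $\mathrm{LockedTo}(\mathrm{pred})=P$; if $PC_P\in\{1.4,1.5\}$ then pred is unmarked and $\mathrm{Next}(\mathrm{pred})=\mathrm{curr}$. NS5: if $PC_P\in\{2.2,2.3,2.4\}$ then $\mathrm{Val}(\mathrm{pred})<x\le\mathrm{Val}(\mathrm{curr})$; if $PC_P\in\{2.5,\dots,2.8\}$ then $\mathrm{Val}(\mathrm{pred})<x=\mathrm{Val}(\mathrm{curr})$; if $PC_P\in\{2.3,\dots,2.8\}$ then $\mathrm{LockedTo}(\mathrm{pred})=P$, and if $PC_P\in\{2.6,2.7,2.8\}$ then $\mathrm{LockedTo}(\mathrm{curr})=P$; if $PC_P\in\{2.4,\dots,2.8\}$ then pred is unmarked, and if $PC_P\in\{2.4,\dots,2.7\}$ then $\mathrm{Next}(\mathrm{pred})=\mathrm{curr}$; if $PC_P=2.7$ then $\mathrm{Marked}(\mathrm{curr})$. *)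

From Stdlib Require Import Arith List.
Import ListNotations.

(* Addresses: the fixed countably infinite set A is taken to be nat,   *)
Definition Addr := nat.
Definition H : Addr := 0.
Definition T : Addr := 1.

Inductive Val := VNeg | VNat (n : nat) | VInf | VBot .

Definition vlt (u v : Val) : Prop :=
  match u, v with
  | VNeg, VNat _ | VNeg, VInf | VNat _, VInf => True
  | VNat m, VNat n => m < n
  | _, _ => False
  end.
Definition vle (u v : Val) : Prop := vlt u v \/ (u = v /\ u <> VBot).

(* Program counters.  The procedure locate is shared by ADD and REMOVE;
   its program counters remember the caller (the return address). *)
Inductive Caller := CAdd | CRem.
Inductive PC :=
  | L0
  | LL1 (c : Caller) | LL2 (c : Caller) | LL31 (c : Caller) | LL32 (c : Caller)
  | LL4 (c : Caller) | LL5 (c : Caller)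
  | A11 | A12 | A13 | A14 | A15 | A16
  | R21 | R22 | R23 | R24 | R25 | R26 | R27 | R28
  | C31 | C32 | C33 | C34 | C35.

Definition is_locL2_L31 (p : PC) : Prop :=
  exists c, p = LL2 c \/ p = LL31 c.
Definition is_locL32 (p : PC) : Prop := exists c, p = LL32 c.
Definition is_locL4 (p : PC) : Prop := exists c, p = LL4 c.
Definition is_locL5 (p : PC) : Prop := exists c, p = LL5 c.

Section LazySet.
Variable Proc : Type.

Record Shared := mkShared {
  act : Addr -> bool;
  mrk : Addr -> bool;
  nxt : Addr -> option Addr;
  vl  : Addr -> Val;
  lck : Addr -> option Proc
}.

Record Local := mkLocal {
  lpred : Addr; lcurr : Addr; ld : Addr; lx : nat; lpc : PC
}.

Record State := mkState { sh : Shared; loc : Proc -> Local }.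

Definition upd {B : Type} (f : Addr -> B) (a : Addr) (b : B) : Addr -> B :=
  fun y => if Nat.eqb y a then b else f y.

Definition setpc (l : Local) (p : PC) : Local :=
  mkLocal (lpred l) (lcurr l) (ld l) (lx l) p.
Definition setpred (l : Local) (a : Addr) : Local :=
  mkLocal a (lcurr l) (ld l) (lx l) (lpc l).
Definition setcurr (l : Local) (a : Addr) : Local :=
  mkLocal (lpred l) a (ld l) (lx l) (lpc l).
Definition setd (l : Local) (a : Addr) : Local :=
  mkLocal (lpred l) (lcurr l) a (lx l) (lpc l).
Definition setx (l : Local) (x : nat) : Local :=
  mkLocal (lpred l) (lcurr l) (ld l) x (lpc l).

Definition setlck (s : Shared) (f : Addr -> option Proc) : Shared :=
  mkShared (act s) (mrk s) (nxt s) (vl s) f.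
Definition setmrk (s : Shared) (f : Addr -> bool) : Shared :=
  mkShared (act s) f (nxt s) (vl s) (lck s).
Definition setnxt (s : Shared) (f : Addr -> option Addr) : Shared :=
  mkShared (act s) (mrk s) f (vl s) (lck s).

Definition lock (s : Shared) (a : Addr) (P : Proc) : Shared :=
  setlck s (upd (lck s) a (Some P)).
Definition unlock (s : Shared) (a : Addr) : Shared :=
  setlck s (upd (lck s) a None).

Definition SC (s : Shared) (l : Local) : Prop :=
  mrk s (lpred l) = false /\ nxt s (lpred l) = Some (lcurr l).

Inductive lstep (P : Proc) : Shared -> Local -> Shared -> Local -> Prop :=
  | st0 s l x p : lpc l = L0 -> (p = A11 \/ p = R21 \/ p = C31) ->
      lstep P s l s (setpc (setx l x) p)
  | st11 s l : lpc l = A11 -> lstep P s l s (setpc l (LL1 CAdd))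
  | st21 s l : lpc l = R21 -> lstep P s l s (setpc l (LL1 CRem))
  | stL1 s l c : lpc l = LL1 c -> lstep P s l s (setpc (setcurr l H) (LL2 c))
  | stL2 s l c : lpc l = LL2 c -> lstep P s l s (setpc l (LL31 c))
  | stL31 s l c : lpc l = LL31 c ->
      lstep P s l s (setpc (setpred l (lcurr l)) (LL32 c))
  | stL32 s l c b : lpc l = LL32 c -> nxt s (lcurr l) = Some b ->
      lstep P s l s (setpc (setcurr l b) (LL4 c))
  | stL4exit s l c : lpc l = LL4 c -> vle (VNat (lx l)) (vl s (lcurr l)) ->
      lstep P s l s (setpc l (LL5 c))
  | stL4loop s l c : lpc l = LL4 c -> ~ vle (VNat (lx l)) (vl s (lcurr l)) ->
      lstep P s l s (setpc l (LL2 c))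
  | stL5add s l : lpc l = LL5 CAdd -> lstep P s l s (setpc l A12)
  | stL5rem s l : lpc l = LL5 CRem -> lstep P s l s (setpc l R22)
  | st12 s l : lpc l = A12 -> lck s (lpred l) = None ->
      lstep P s l (lock s (lpred l) P) (setpc l A13)
  | st13f s l : lpc l = A13 -> ~ SC s l ->
      lstep P s l (unlock s (lpred l)) (setpc l L0)
  | st13t s l : lpc l = A13 -> SC s l -> lstep P s l s (setpc l A14)
  | st14r s l : lpc l = A14 -> vl s (lcurr l) = VNat (lx l) ->
      lstep P s l (unlock s (lpred l)) (setpc l L0)
  | st14c s l : lpc l = A14 -> vl s (lcurr l) <> VNat (lx l) ->
      lstep P s l s (setpc l A15)
  | st15 s l a : lpc l = A15 -> act s a = false ->
      lstep P s l
        (mkShared (upd (act s) a true) (mrk s)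
                  (upd (upd (nxt s) a (Some (lcurr l))) (lpred l) (Some a))
                  (upd (vl s) a (VNat (lx l))) (lck s))
        (setpc l A16)
  | st16 s l : lpc l = A16 -> lstep P s l (unlock s (lpred l)) (setpc l L0)
  | st22 s l : lpc l = R22 -> lck s (lpred l) = None ->
      lstep P s l (lock s (lpred l) P) (setpc l R23)
  | st23f s l : lpc l = R23 -> ~ SC s l ->
      lstep P s l (unlock s (lpred l)) (setpc l L0)
  | st23t s l : lpc l = R23 -> SC s l -> lstep P s l s (setpc l R24)
  | st24r s l : lpc l = R24 -> vlt (VNat (lx l)) (vl s (lcurr l)) ->
      lstep P s l (unlock s (lpred l)) (setpc l L0)
  | st24c s l : lpc l = R24 -> ~ vlt (VNat (lx l)) (vl s (lcurr l)) ->
      lstep P s l s (setpc l R25)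
  | st25 s l b : lpc l = R25 -> lck s (lcurr l) = None ->
      nxt s (lcurr l) = Some b ->
      lstep P s l (lock s (lcurr l) P) (setpc (setd l b) R26)
  | st26 s l : lpc l = R26 ->
      lstep P s l (setmrk s (upd (mrk s) (lcurr l) true)) (setpc l R27)
  | st27 s l : lpc l = R27 ->
      lstep P s l (setnxt s (upd (nxt s) (lpred l) (Some (ld l)))) (setpc l R28)
  | st28 s l : lpc l = R28 ->
      lstep P s l (unlock (unlock s (lcurr l)) (lpred l)) (setpc l L0)
  | st31 s l : lpc l = C31 -> lstep P s l s (setpc (setcurr l H) C32)
  | st32 s l : lpc l = C32 -> lstep P s l s (setpc l C33)
  | st33 s l b : lpc l = C33 -> nxt s (lcurr l) = Some b ->
      lstep P s l s (setpc (setcurr l b) C34)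
  | st34exit s l : lpc l = C34 -> vle (VNat (lx l)) (vl s (lcurr l)) ->
      lstep P s l s (setpc l C35)
  | st34loop s l : lpc l = C34 -> ~ vle (VNat (lx l)) (vl s (lcurr l)) ->
      lstep P s l s (setpc l C32)
  | st35 s l : lpc l = C35 -> lstep P s l s (setpc l L0).

Definition step (P : Proc) (S S' : State) : Prop :=
  lstep P (sh S) (loc S P) (sh S') (loc S' P) /\
  forall Q, Q <> P -> loc S' Q = loc S Q.

Definition initial (S : State) : Prop :=
  (forall a, act (sh S) a = orb (Nat.eqb a H) (Nat.eqb a T)) /\
  (forall a, mrk (sh S) a = false) /\
  nxt (sh S) H = Some T /\ nxt (sh S) T = None /\
  (forall a, a <> H -> a <> T -> nxt (sh S) a = Some a) /\
  vl (sh S) H = VNeg /\ vl (sh S) T = VInf /\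
  (forall a, a <> H -> a <> T -> vl (sh S) a = VBot) /\
  (forall a, lck (sh S) a = None) /\
  (forall P, lpred (loc S P) = H /\ lcurr (loc S P) = T /\ lpc (loc S P) = L0).

(* A history sequence (S_0, e_0, S_1, ..., S_n) of length n
   (infinite histories are covered by all their finite prefixes). *)
Definition history (n : nat) (H_ : nat -> State) : Prop :=
  initial (H_ 0) /\ forall i, i < n -> exists P, step P (H_ i) (H_ (i + 1)).

Inductive chain (s : Shared) : list Addr -> Prop :=
  | chain_one a : chain s [a]
  | chain_cons a b l : a <> T -> nxt s a = Some b -> chain s (b :: l) ->
      chain s (a :: b :: l).

Definition path (s : Shared) (a b : Addr) : Prop :=
  exists mid, NoDup (a :: mid ++ [b]) /\ chain s (a :: mid ++ [b]).

Definition on_main (s : Shared) (a : Addr) : Prop :=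
  exists mid, NoDup (H :: mid ++ [T]) /\ chain s (H :: mid ++ [T]) /\
              In a (H :: mid ++ [T]).

Definition NS1 (S : State) : Prop :=
  let s := sh S in
  act s H = true /\ act s T = true /\ vl s H = VNeg /\ vl s T = VInf /\
  (forall a, act s a = true -> a <> H -> a <> T -> exists n, vl s a = VNat n) /\
  (forall a, act s a = true -> a <> T ->
     exists b, nxt s a = Some b /\ act s b = true /\ vlt (vl s a) (vl s b)) /\
  (forall P, act s (lpred (loc S P)) = true /\ act s (lcurr (loc S P)) = true) /\
  (exists fin : list Addr, forall a, act s a = true -> In a fin) /\
  (forall a b, act s a = true -> act s b = true -> ~ (path s a b /\ path s b a)) /\
  (forall a, act s a = true -> a <> T -> path s a T).

Definition NS2 (S : State) : Prop :=
  forall a, act (sh S) a = true <-> (on_main (sh S) a \/ mrk (sh S) a = true).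

Definition NS3 (S : State) : Prop :=
  forall P, let s := sh S in let l := loc S P in
  let vp := vl s (lpred l) in let vc := vl s (lcurr l) in let x := VNat (lx l) in
  (is_locL2_L31 (lpc l) -> vlt vc x) /\
  (is_locL32 (lpc l) -> lpred l = lcurr l /\ vlt vp x) /\
  (is_locL4 (lpc l) -> vlt vp vc /\ vlt vp x) /\
  (is_locL5 (lpc l) -> vlt vp x /\ vle x vc).

Definition NS4 (S : State) : Prop :=
  forall P, let s := sh S in let l := loc S P in
  let vp := vl s (lpred l) in let vc := vl s (lcurr l) in let x := VNat (lx l) in
  (In (lpc l) [A12; A13; A14] -> vlt vp x /\ vle x vc) /\
  (lpc l = A15 -> vlt vp x /\ vlt x vc) /\
  (In (lpc l) [A13; A14; A15; A16] -> lck s (lpred l) = Some P) /\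
  (In (lpc l) [A14; A15] ->
     mrk s (lpred l) = false /\ nxt s (lpred l) = Some (lcurr l)).

Definition NS5 (S : State) : Prop :=
  forall P, let s := sh S in let l := loc S P in
  let vp := vl s (lpred l) in let vc := vl s (lcurr l) in let x := VNat (lx l) in
  (In (lpc l) [R22; R23; R24] -> vlt vp x /\ vle x vc) /\
  (In (lpc l) [R25; R26; R27; R28] -> vlt vp x /\ x = vc) /\
  (In (lpc l) [R23; R24; R25; R26; R27; R28] -> lck s (lpred l) = Some P) /\
  (In (lpc l) [R26; R27; R28] -> lck s (lcurr l) = Some P) /\
  (In (lpc l) [R24; R25; R26; R27; R28] -> mrk s (lpred l) = false) /\
  (In (lpc l) [R24; R25; R26; R27] -> nxt s (lpred l) = Some (lcurr l)) /\
  (lpc l = R27 -> mrk s (lcurr l) = true).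

Definition normal (S : State) : Prop :=
  NS1 S /\ NS2 S /\ NS3 S /\ NS4 S /\ NS5 S.

End LazySet.

Arguments step {Proc}.
Arguments history {Proc}.
Arguments normal {Proc}.

(** Normality is proved by induction along the history, but NS1-NS5 are not
    preserved by single steps, so they are strengthened.  The shared part replaces
    paths by reachability along Next: every active address reaches T, every
    unmarked active address is reached from H, marked addresses are active, and
    values strictly increase along Next.  The last fact makes every Next-walk from
    an active address duplicate-free, which turns reachability back into paths and
    rules out loops.  The per-process part, indexed by the program counter, adds
    the locks held.  A process writes Next or Marked only at addresses it has
    locked, so the facts of the other processes survive its steps.  The two pointer
    updates (insertion at 1.5, unlinking at 2.7) change Next only at the locked
    [pred]: walks that reach [pred] are unchanged up to it, and walks starting at a
    larger value never come back to [pred], so reachability of T and from H is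
    preserved. *)

From Stdlib Require Import Arith List Lia Classical.
Import ListNotations.

Local Arguments act {Proc}. Local Arguments mrk {Proc}. Local Arguments nxt {Proc}.
Local Arguments vl {Proc}. Local Arguments lck {Proc}. Local Arguments mkShared {Proc}.
Local Arguments lock {Proc}. Local Arguments unlock {Proc}. Local Arguments setmrk {Proc}.
Local Arguments setnxt {Proc}. Local Arguments lstep {Proc}. Local Arguments sh {Proc}.
Local Arguments loc {Proc}. Local Arguments chain {Proc}. Local Arguments path {Proc}.
Local Arguments on_main {Proc}. Local Arguments NS1 {Proc}. Local Arguments NS2 {Proc}.
Local Arguments NS3 {Proc}. Local Arguments NS4 {Proc}. Local Arguments NS5 {Proc}.

Lemma vlt_irrefl v : ~ vlt v v.
Proof. destruct v; simpl; lia. Qed.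

Lemma vlt_trans u v w : vlt u v -> vlt v w -> vlt u w.
Proof. destruct u, v, w; simpl; try tauto; lia. Qed.

Lemma neq_of_vlt_eq {Proc} (s : Shared Proc) a b v : vlt (vl s a) v -> v = vl s b -> a <> b.
Proof. intros Hv Hb ->. rewrite <- Hb in Hv. exact (vlt_irrefl _ Hv). Qed.

Lemma upd_eq {B} (f : Addr -> B) a b : upd f a b a = b.
Proof. unfold upd. now rewrite Nat.eqb_refl. Qed.

Lemma upd_ne {B} (f : Addr -> B) a b y : y <> a -> upd f a b y = f y.
Proof. unfold upd. intros Hya. destruct (Nat.eqb_spec y a); congruence. Qed.

Local Ltac simpl_upd := repeat first [rewrite upd_eq | rewrite upd_ne by congruence].

Local Ltac case_upd := unfold upd;
  repeat match goal with |- context [Nat.eqb ?y ?z] => destruct (Nat.eqb_spec y z) end.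

Section Reach.
Context {Proc : Type}.
Implicit Types s : Shared Proc.

Inductive reach s : Addr -> Addr -> Prop :=
  | reach_refl a : reach s a a
  | reach_step a b c : a <> T -> nxt s a = Some b -> reach s b c -> reach s a c.

Definition next_increasing s : Prop :=
  forall a, act s a = true -> a <> T ->
  exists b, nxt s a = Some b /\ act s b = true /\ vlt (vl s a) (vl s b).

Lemma reach_trans s x y z : reach s x y -> reach s y z -> reach s x z.
Proof. induction 1; intros; auto. econstructor; eauto. Qed.

Lemma reach_next s x y c : reach s x y -> x <> y -> nxt s x = Some c -> reach s c y.
Proof. intros R; inversion R; subst; intros; congruence. Qed.

Lemma reach_vlt s x y : next_increasing s -> reach s x y -> act s x = true ->
  act s y = true /\ (x = y \/ vlt (vl s x) (vl s y)).
Proof.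
  intros Hinc R. induction R as [|a b c HaT Hab R IH]; intros Ha; auto.
  destruct (Hinc a Ha HaT) as [b' [Hab' [Hb Hv]]]. rewrite Hab in Hab'. injection Hab' as <-.
  destruct (IH Hb) as [Hc [<-|Hv']]; split; auto; right; eauto using vlt_trans.
Qed.

Lemma reach_transfer s s' x y : reach s x y ->
  (forall z, reach s x z -> reach s z y -> z <> y -> nxt s' z = nxt s z) -> reach s' x y.
Proof.
  induction 1 as [a|a b c HaT Hab R IH]; intros Hsame; [constructor|].
  destruct (Nat.eq_dec a c) as [<-|Hac]; [constructor|].
  apply reach_step with b; [exact HaT| |].
  - rewrite Hsame; auto; [constructor|econstructor; eauto].
  - apply IH. intros z Rz Rz' Hz. apply Hsame; auto. econstructor; eauto.
Qed.

Lemma reach_ext s s' x y : (forall a, nxt s' a = nxt s a) -> reach s x y -> reach s' x y.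
Proof. intros E R. apply reach_transfer with s; auto. Qed.

End Reach.

Record shared_inv {Proc} (s : Shared Proc) : Prop := {
  inv_act_H : act s H = true;
  inv_act_T : act s T = true;
  inv_val_H : vl s H = VNeg;
  inv_val_T : vl s T = VInf;
  inv_next_T : nxt s T = None;
  inv_val_nat : forall a, act s a = true -> a <> H -> a <> T -> exists n, vl s a = VNat n;
  inv_next_increasing : next_increasing s;
  inv_active_finite : exists fin, forall a, act s a = true -> In a fin;
  inv_reach_T : forall a, act s a = true -> reach s a T;
  inv_marked_active : forall a, mrk s a = true -> act s a = true;
  inv_unmarked_reached : forall a, act s a = true -> mrk s a = false -> reach s H a }.

Arguments inv_act_H {Proc s}. Arguments inv_act_T {Proc s}.
Arguments inv_val_H {Proc s}. Arguments inv_val_T {Proc s}.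
Arguments inv_next_T {Proc s}. Arguments inv_val_nat {Proc s}.
Arguments inv_next_increasing {Proc s}. Arguments inv_active_finite {Proc s}.
Arguments inv_reach_T {Proc s}. Arguments inv_marked_active {Proc s}.
Arguments inv_unmarked_reached {Proc s}.

Section SharedInv.
Context {Proc : Type}.
Implicit Types s : Shared Proc.

Lemma next_active s a b : shared_inv s -> act s a = true -> nxt s a = Some b ->
  act s b = true /\ vlt (vl s a) (vl s b).
Proof.
  intros SI Ha Hab. destruct (Nat.eq_dec a T) as [->|HaT].
  - rewrite (inv_next_T SI) in Hab. discriminate.
  - destruct (inv_next_increasing SI a Ha HaT) as [b' [Hab' Hb]]. congruence.
Qed.

Lemma neq_T_of_vlt s a v : shared_inv s -> vlt (vl s a) v -> a <> T.
Proof. intros SI Hv ->. rewrite (inv_val_T SI) in Hv. destruct v; simpl in Hv; auto. Qed.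

Lemma vlt_of_not_vle s a x : shared_inv s -> act s a = true ->
  ~ vle (VNat x) (vl s a) -> vlt (vl s a) (VNat x).
Proof.
  intros SI Ha Hnle. unfold vle in Hnle.
  destruct (Nat.eq_dec a H) as [->|HaH]; [rewrite (inv_val_H SI); exact I|].
  destruct (Nat.eq_dec a T) as [->|HaT]; [rewrite (inv_val_T SI) in Hnle; simpl in Hnle; tauto|].
  destruct (inv_val_nat SI a Ha HaH HaT) as [k Hk]. rewrite Hk in *. simpl in *.
  destruct (Nat.lt_trichotomy x k) as [Hxk|[<-|Hkx]]; auto; exfalso; apply Hnle; auto.
  right. split; congruence.
Qed.

Lemma shared_inv_ext s s' : shared_inv s ->
  (forall a, act s' a = act s a) -> (forall a, mrk s' a = mrk s a) ->
  (forall a, nxt s' a = nxt s a) -> (forall a, vl s' a = vl s a) -> shared_inv s'.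
Proof.
  intros [] Ea Em En Ev.
  assert (R : forall x y, reach s x y -> reach s' x y) by (intros; eapply reach_ext; eauto).
  constructor; try rewrite Ea; try rewrite Ev; try rewrite En; auto.
  - intros a. rewrite Ea, Ev. auto.
  - intros a Ha HaT. rewrite Ea in Ha. destruct (inv_next_increasing0 a Ha HaT) as [b [? [? ?]]].
    exists b. rewrite En, Ea, !Ev. auto.
  - destruct inv_active_finite0 as [f F]. exists f. intros a. rewrite Ea. auto.
  - intros a. rewrite Ea. auto.
  - intros a. rewrite Em, Ea. auto.
  - intros a. rewrite Em, Ea. auto.
Qed.

Lemma shared_inv_mark s c : shared_inv s -> act s c = true ->
  shared_inv (setmrk s (upd (mrk s) c true)).
Proof.
  intros SI Hc.
  assert (R : forall x y, reach s x y -> reach (setmrk s (upd (mrk s) c true)) x y)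
    by (intros x y; apply reach_ext; reflexivity).
  destruct SI; constructor; simpl; auto.
  - unfold upd. intros a. destruct (Nat.eqb_spec a c); [congruence|auto].
  - unfold upd. intros a Ha. destruct (Nat.eqb_spec a c); [congruence|auto].
Qed.

(* A single Next pointer, at [p], is redirected; addresses inactive in [s]
   (such as a freshly allocated node) may change too. *)
Section Redirect.
Variables (s s' : Shared Proc) (p : Addr).
Hypothesis SI : shared_inv s.
Hypothesis next_same : forall z, act s z = true -> z <> p -> nxt s' z = nxt s z.

Lemma reach_redirect_upto u : act s u = true -> reach s u p -> reach s' u p.
Proof.
  intros Hu R. apply reach_transfer with s; auto. intros z Rz _ Hz.
  apply next_same; auto. apply (reach_vlt _ _ _ (inv_next_increasing SI) Rz Hu).
Qed.

Lemma reach_redirect_avoiding u y : act s u = true -> reach s u y ->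
  ~ (reach s u p /\ reach s p y) -> reach s' u y.
Proof.
  intros Hu R Hnp. apply reach_transfer with s; auto. intros z Rz Rz' _.
  apply next_same; [apply (reach_vlt _ _ _ (inv_next_increasing SI) Rz Hu)|].
  intros ->. auto.
Qed.

(* Values increase along Next, so a walk from above [p] never meets [p]. *)
Lemma reach_redirect_beyond c y : act s c = true -> vlt (vl s p) (vl s c) ->
  reach s c y -> reach s' c y.
Proof.
  intros Hc Hpc R. apply reach_transfer with s; auto. intros z Rz _ _.
  destruct (reach_vlt _ _ _ (inv_next_increasing SI) Rz Hc) as [Hz [<-|Hcz]];
    apply next_same; auto; intros ->.
  - exact (vlt_irrefl _ Hpc).
  - exact (vlt_irrefl _ (vlt_trans _ _ _ Hpc Hcz)).
Qed.

Lemma reach_T_redirect : reach s' p T -> forall b, act s b = true -> reach s' b T.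
Proof.
  intros HpT b Hb. destruct (classic (reach s b p)) as [Rbp|Rbp].
  - apply reach_trans with p; auto. apply reach_redirect_upto; auto.
  - apply reach_redirect_avoiding; [auto|apply (inv_reach_T SI); auto|tauto].
Qed.

Lemma reach_H_redirect : act s p = true -> mrk s p = false ->
  (forall b, act s b = true -> mrk s b = false -> reach s p b -> p <> b -> reach s' p b) ->
  forall b, act s b = true -> mrk s b = false -> reach s' H b.
Proof.
  intros Hp Hmp Hbeyond b Hb Hmb.
  assert (RHp : reach s' H p)
    by (apply reach_redirect_upto; [apply (inv_act_H SI)|apply (inv_unmarked_reached SI); auto]).
  destruct (classic (reach s p b)) as [Rpb|Rpb].
  - destruct (Nat.eq_dec p b) as [<-|Hpb]; auto. apply reach_trans with p; auto.
  - apply reach_redirect_avoiding; [apply (inv_act_H SI)| |tauto].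
    apply (inv_unmarked_reached SI); auto.
Qed.

End Redirect.

Lemma shared_inv_insert s a p c x : shared_inv s -> act s a = false ->
  act s p = true -> mrk s p = false -> nxt s p = Some c ->
  vlt (vl s p) (VNat x) -> vlt (VNat x) (vl s c) ->
  shared_inv (mkShared (upd (act s) a true) (mrk s)
                (upd (upd (nxt s) a (Some c)) p (Some a)) (upd (vl s) a (VNat x)) (lck s)).
Proof.
  intros SI Ha Hp Hmp Hpc Hpx Hxc.
  set (s' := mkShared _ _ _ _ _).
  destruct (next_active _ _ _ SI Hp Hpc) as [Hc Hvpc].
  assert (HaH : a <> H) by (intros ->; rewrite (inv_act_H SI) in Ha; discriminate).
  assert (HaT : a <> T) by (intros ->; rewrite (inv_act_T SI) in Ha; discriminate).
  assert (HpT : p <> T) by exact (neq_T_of_vlt _ _ _ SI Hpx).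
  assert (same : forall z, act s z = true -> z <> p -> nxt s' z = nxt s z)
    by (intros z Hz Hzp; simpl; rewrite !upd_ne; congruence).
  assert (Npa : nxt s' p = Some a) by (simpl; apply upd_eq).
  assert (Nac : nxt s' a = Some c) by (simpl; simpl_upd; auto).
  assert (beyond_c : forall y, reach s c y -> reach s' p y)
    by (intros y R; apply reach_step with a; auto;
        apply reach_step with c; auto; apply (reach_redirect_beyond s s' p); auto).
  assert (old : forall b, act s' b = true -> b = a \/ act s b = true)
    by (intros b; simpl; unfold upd; destruct (Nat.eqb_spec b a); auto).
  constructor; simpl; try (rewrite !upd_ne by congruence; apply SI).
  - intros b Hb HbH HbT. destruct (old b Hb) as [->|Hb']; [rewrite upd_eq; eauto|].
    rewrite upd_ne by congruence. apply (inv_val_nat SI); auto.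
  - intros b Hb HbT. destruct (old b Hb) as [->|Hb'].
    + exists c. split; [exact Nac|]. simpl. simpl_upd. auto.
    + destruct (Nat.eq_dec b p) as [->|Hbp].
      * exists a. split; [exact Npa|]. simpl. simpl_upd. auto.
      * destruct (inv_next_increasing SI b Hb' HbT) as [d [Hbd [Hd Hv]]].
        exists d. split; [rewrite same; auto|]. simpl. simpl_upd. auto.
  - destruct (inv_active_finite SI) as [f F]. exists (a :: f). intros b Hb.
    destruct (old b Hb) as [->|Hb']; simpl; auto.
  - intros b Hb. destruct (old b Hb) as [->|Hb'].
    + apply reach_step with c; auto. apply (reach_redirect_beyond s s' p); auto.
      apply (inv_reach_T SI); auto.
    + apply (reach_T_redirect s s' p); auto. apply beyond_c, (inv_reach_T SI); auto.
  - intros b Hmb. rewrite upd_ne; [apply (inv_marked_active SI); auto|].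
    intros ->. rewrite (inv_marked_active SI a Hmb) in Ha. discriminate.
  - intros b Hb Hmb. destruct (old b Hb) as [->|Hb'].
    + apply reach_trans with p; [|apply reach_step with a; auto; constructor].
      apply (reach_redirect_upto s s' p); auto; [apply SI|apply (inv_unmarked_reached SI); auto].
    + apply (reach_H_redirect s s' p); auto. intros e He Hme Rpe Hpe.
      apply beyond_c. eapply reach_next; eauto.
Qed.

Lemma shared_inv_unlink s p c d : shared_inv s ->
  act s p = true -> mrk s p = false -> nxt s p = Some c ->
  mrk s c = true -> nxt s c = Some d ->
  shared_inv (setnxt s (upd (nxt s) p (Some d))).
Proof.
  intros SI Hp Hmp Hpc Hmc Hcd.
  set (s' := setnxt _ _).
  destruct (next_active _ _ _ SI Hp Hpc) as [Hc Hvpc].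
  destruct (next_active _ _ _ SI Hc Hcd) as [Hd Hvcd].
  assert (Hvpd : vlt (vl s p) (vl s d)) by eauto using vlt_trans.
  assert (HpT : p <> T) by exact (neq_T_of_vlt _ _ _ SI Hvpc).
  assert (same : forall z, act s z = true -> z <> p -> nxt s' z = nxt s z)
    by (intros z _ Hzp; simpl; rewrite upd_ne; auto).
  assert (Npd : nxt s' p = Some d) by (simpl; apply upd_eq).
  assert (beyond_d : forall y, reach s d y -> reach s' p y)
    by (intros y R; apply reach_step with d; auto; apply (reach_redirect_beyond s s' p); auto).
  constructor; simpl; try apply SI.
  - rewrite upd_ne by auto. apply SI.
  - intros b Hb HbT. destruct (Nat.eq_dec b p) as [->|Hbp].
    + exists d. auto.
    + rewrite same by auto. apply (inv_next_increasing SI); auto.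
  - apply (reach_T_redirect s s' p); auto. apply beyond_d, (inv_reach_T SI); auto.
  - apply (reach_H_redirect s s' p); auto. intros e He Hme Rpe Hpe.
    assert (Hce : c <> e) by congruence.
    apply beyond_d. apply reach_next with c; auto. eapply reach_next; eauto.
Qed.

End SharedInv.

(* Strengthens the per-process part of NS1 and NS3-NS5: it also records the lock
   held at 1.6 and the value of [d] from line 2.5 on. *)
Definition local_inv {Proc} (s : Shared Proc) (P : Proc) (l : Local) : Prop :=
  let vp := vl s (lpred l) in let vc := vl s (lcurr l) in let x := VNat (lx l) in
  act s (lpred l) = true /\ act s (lcurr l) = true /\
  match lpc l with
  | LL2 _ | LL31 _ => vlt vc x
  | LL32 _ => lpred l = lcurr l /\ vlt vp x
  | LL4 _ => vlt vp vc /\ vlt vp x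
  | LL5 _ | A12 | R22 => vlt vp x /\ vle x vc
  | A13 | R23 => vlt vp x /\ vle x vc /\ lck s (lpred l) = Some P
  | A14 | R24 => vlt vp x /\ vle x vc /\ lck s (lpred l) = Some P
      /\ mrk s (lpred l) = false /\ nxt s (lpred l) = Some (lcurr l)
  | A15 => vlt vp x /\ vlt x vc /\ lck s (lpred l) = Some P
      /\ mrk s (lpred l) = false /\ nxt s (lpred l) = Some (lcurr l)
  | A16 => lck s (lpred l) = Some P
  | R25 => vlt vp x /\ x = vc /\ lck s (lpred l) = Some P
      /\ mrk s (lpred l) = false /\ nxt s (lpred l) = Some (lcurr l)
  | R26 => vlt vp x /\ x = vc /\ lck s (lpred l) = Some P /\ lck s (lcurr l) = Some P
      /\ mrk s (lpred l) = false /\ nxt s (lpred l) = Some (lcurr l)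
      /\ nxt s (lcurr l) = Some (ld l)
  | R27 => vlt vp x /\ x = vc /\ lck s (lpred l) = Some P /\ lck s (lcurr l) = Some P
      /\ mrk s (lpred l) = false /\ nxt s (lpred l) = Some (lcurr l)
      /\ nxt s (lcurr l) = Some (ld l) /\ mrk s (lcurr l) = true
  | R28 => vlt vp x /\ x = vc /\ lck s (lpred l) = Some P /\ lck s (lcurr l) = Some P
      /\ mrk s (lpred l) = false
  | _ => True
  end.

Section Interference.
Context {Proc : Type}.
Variables (s : Shared Proc) (P Q : Proc) (m : Local).
Hypotheses (HQ : local_inv s Q m) (HPQ : Q <> P).

(* [Q] only speaks about Next and Marked at addresses it holds locked, so
   writes by [P] at addresses [P] holds locked cannot disturb it. *)
Local Ltac interference :=
  intros; revert HQ; unfold local_inv; simpl; destruct (lpc m); case_upd; intuition congruence.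

Lemma local_inv_lock_other a : lck s a = None -> local_inv (lock s a P) Q m.
Proof. interference. Qed.

Lemma local_inv_unlock_other a : lck s a = Some P -> local_inv (unlock s a) Q m.
Proof. interference. Qed.

Lemma local_inv_mark_other a : lck s a = Some P ->
  local_inv (setmrk s (upd (mrk s) a true)) Q m.
Proof. interference. Qed.

Lemma local_inv_relink_other a d : lck s a = Some P ->
  local_inv (setnxt s (upd (nxt s) a (Some d))) Q m.
Proof. interference. Qed.

Lemma local_inv_insert_other a p c x : lck s p = Some P -> act s a = false ->
  local_inv (mkShared (upd (act s) a true) (mrk s) (upd (upd (nxt s) a (Some c)) p (Some a))
               (upd (vl s) a (VNat x)) (lck s)) Q m.
Proof. interference. Qed.

End Interference.

Lemma local_inv_step_self {Proc} (s s' : Shared Proc) P l l' : shared_inv s ->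
  local_inv s P l -> lstep P s l s' l' -> local_inv s' P l'.
Proof.
  intros SI HL Hst. pose proof (inv_act_H SI) as HactH.
  destruct Hst; unfold local_inv in *; simpl in *;
    match goal with E : lpc _ = _ |- _ => rewrite E in HL end.
  all: try (unfold SC, vle in *; case_upd; intuition congruence).
  - destruct HL as [Hp [Hc _]].
    match goal with Hpc : _ \/ _ |- _ => destruct Hpc as [-> | [-> | ->]] end; auto.
  - rewrite (inv_val_H SI). intuition.
  - destruct HL as [Hp [Hc [E Hpx]]]. rewrite E in *.
    match goal with Hn : nxt s _ = Some _ |- _ => destruct (next_active _ _ _ SI Hc Hn) end.
    auto.
  - destruct HL as [Hp [Hc _]]. auto using vlt_of_not_vle.
  - destruct HL as [Hp [Hc [Hpx [Hxc Hrest]]]].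
    rewrite upd_eq, upd_ne by exact (neq_of_vlt_eq _ _ _ _ Hpx Hxc). intuition.
  - destruct HL as [Hp [Hc _]].
    match goal with Hn : nxt s _ = Some _ |- _ => destruct (next_active _ _ _ SI Hc Hn) end. auto.
Qed.

Lemma shared_inv_step {Proc} (s s' : Shared Proc) P l l' : shared_inv s ->
  local_inv s P l -> lstep P s l s' l' -> shared_inv s'.
Proof.
  intros SI HL Hst.
  destruct Hst; unfold local_inv in HL;
    match goal with E : lpc _ = _ |- _ => rewrite E in HL end;
    try exact SI; try (apply shared_inv_ext with s; auto; fail).
  - destruct HL as [Hp [_ [Hpx [Hxc [_ [Hmp Hpc]]]]]]. eapply shared_inv_insert; eauto.
  - destruct HL as [_ [Hc _]]. apply shared_inv_mark; auto.
  - destruct HL as [Hp [_ [_ [_ [_ [_ [Hmp [Hpc [Hcd Hmc]]]]]]]]].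
    eapply shared_inv_unlink; eauto.
Qed.

Lemma local_inv_step_other {Proc} (s s' : Shared Proc) P Q l l' m : shared_inv s ->
  local_inv s P l -> local_inv s Q m -> Q <> P -> lstep P s l s' l' -> local_inv s' Q m.
Proof.
  intros SI HL HQ HPQ Hst.
  destruct Hst; unfold local_inv in HL;
    match goal with E : lpc _ = _ |- _ => rewrite E in HL end;
    try exact HQ; try (eapply local_inv_lock_other; eauto; fail);
    try (eapply local_inv_unlock_other; eauto; tauto).
  - destruct HL as [_ [_ [_ [_ [Hl _]]]]]. eapply local_inv_insert_other; eauto.
  - destruct HL as [_ [_ [_ [_ [_ [Hl _]]]]]]. eapply local_inv_mark_other; eauto.
  - destruct HL as [_ [_ [_ [_ [Hl _]]]]]. eapply local_inv_relink_other; eauto.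
  - destruct HL as [_ [_ [Hpx [Hxc [Hlp [Hlc _]]]]]].
    apply local_inv_unlock_other with P; [eapply local_inv_unlock_other; eauto|auto|].
    simpl. rewrite upd_ne; [auto|exact (neq_of_vlt_eq _ _ _ _ Hpx Hxc)].
Qed.

Definition state_inv {Proc} (S : State Proc) : Prop :=
  shared_inv (sh S) /\ forall Q, local_inv (sh S) Q (loc S Q).

Lemma state_inv_step {Proc} (S S' : State Proc) P : state_inv S -> step P S S' -> state_inv S'.
Proof.
  intros [SI LI] [Hst Hothers]. split.
  - eapply shared_inv_step; eauto.
  - intros Q. destruct (classic (Q = P)) as [->|HQP].
    + eapply local_inv_step_self; eauto.
    + rewrite Hothers by auto. eapply local_inv_step_other; eauto.
Qed.

Lemma state_inv_initial {Proc} (S : State Proc) : initial Proc S -> state_inv S.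
Proof.
  intros [Ha [Hm [NH [NT [_ [VH [VT [_ [_ Hloc]]]]]]]]].
  assert (HT_only : forall a, act (sh S) a = true -> a = H \/ a = T).
  { intros a. rewrite Ha.
    destruct (Nat.eqb_spec a H), (Nat.eqb_spec a T); simpl; auto; discriminate. }
  assert (RHT : reach (sh S) H T) by (apply reach_step with T; [discriminate|auto|constructor]).
  split.
  - constructor; auto.
    + intros a Ha' ? ?. destruct (HT_only a Ha'); congruence.
    + intros a Ha' ?. destruct (HT_only a Ha') as [->| ->]; [|congruence].
      exists T. rewrite VH, VT, !Ha. repeat split; auto.
    + exists [H; T]. intros a Ha'. destruct (HT_only a Ha') as [->| ->]; simpl; auto.
    + intros a Ha'. destruct (HT_only a Ha') as [->| ->]; auto. constructor.
    + intros a Hma. rewrite Hm in Hma. discriminate.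
    + intros a Ha' _. destruct (HT_only a Ha') as [->| ->]; auto. constructor.
  - intros Q. unfold local_inv. destruct (Hloc Q) as [-> [-> ->]]. rewrite !Ha. auto.
Qed.

Section Paths.
Context {Proc : Type}.
Implicit Types s : Shared Proc.

Lemma chain_reach s a l y : chain s (a :: l) -> In y (a :: l) -> reach s a y.
Proof.
  revert a. induction l as [|b l IH]; intros a Ch Hy.
  - destruct Hy as [<-|[]]. constructor.
  - inversion Ch as [|? ? ? HaT Hab Ch']; subst.
    destruct Hy as [<-|Hy]; [constructor|]. apply reach_step with b; auto.
Qed.

Lemma reach_chain s x y : reach s x y -> x <> y -> exists mid, chain s (x :: mid ++ [y]).
Proof.
  induction 1 as [|a b c HaT Hab R IH]; intros Hac; [congruence|].
  destruct (Nat.eq_dec b c) as [<-|Hbc].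
  - exists []. repeat constructor; auto.
  - destruct (IH Hbc) as [mid Ch]. exists (b :: mid). constructor; auto.
Qed.

Lemma chain_cat s m1 x a m2 y : chain s (x :: m1 ++ [a]) -> chain s (a :: m2 ++ [y]) ->
  chain s (x :: (m1 ++ a :: m2) ++ [y]).
Proof.
  revert x. induction m1 as [|c m1 IH]; intros x C1 C2;
    inversion C1 as [|? ? ? HxT Hx C1']; subst; constructor; auto.
Qed.

Lemma chain_nodup s x l : next_increasing s -> act s x = true -> chain s (x :: l) ->
  NoDup (x :: l).
Proof.
  intros Hinc. revert x. induction l as [|b l IH]; intros x Hx Ch.
  - repeat constructor. intros [].
  - inversion Ch as [|? ? ? HxT Hxb Ch']; subst.
    destruct (Hinc x Hx HxT) as [b' [Hxb' [Hb Hv]]]. rewrite Hxb in Hxb'. injection Hxb' as <-.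
    constructor; [|exact (IH b Hb Ch')]. intros Hin.
    destruct (reach_vlt _ _ _ Hinc (chain_reach _ _ _ _ Ch' Hin) Hb) as [_ [<-|Hv']].
    + exact (vlt_irrefl _ Hv).
    + exact (vlt_irrefl _ (vlt_trans _ _ _ Hv Hv')).
Qed.

Lemma path_of_reach s a b : next_increasing s -> act s a = true -> reach s a b -> a <> b ->
  path s a b.
Proof.
  intros Hinc Ha R Hab. destruct (reach_chain _ _ _ R Hab) as [mid Ch].
  exists mid. split; auto. apply (chain_nodup _ _ _ Hinc Ha Ch).
Qed.

Lemma reach_of_path s a b : path s a b -> reach s a b /\ a <> b.
Proof.
  intros [mid [ND Ch]]. split.
  - apply (chain_reach _ _ _ _ Ch). right. apply in_or_app. right. left. auto.
  - intros ->. inversion ND as [|? ? Hnin _]. apply Hnin, in_or_app. right. left. auto.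
Qed.

Lemma on_main_of_reach s a : shared_inv s -> reach s H a -> reach s a T -> on_main s a.
Proof.
  intros SI RHa RaT. pose proof (inv_next_increasing SI) as Hinc.
  assert (HT : H <> T) by discriminate.
  assert (main : forall mid, chain s (H :: mid ++ [T]) ->
            In a (H :: mid ++ [T]) -> on_main s a).
  { intros mid Ch Hin. exists mid. repeat split; auto.
    apply (chain_nodup _ _ _ Hinc (inv_act_H SI) Ch). }
  destruct (Nat.eq_dec a H) as [->|HaH].
  - destruct (reach_chain _ _ _ RaT HT) as [mid Ch]. apply (main mid Ch). left. auto.
  - destruct (Nat.eq_dec a T) as [->|HaT].
    + destruct (reach_chain _ _ _ RHa HT) as [mid Ch]. apply (main mid Ch).
      right. apply in_or_app. right. left. auto.
    + destruct (reach_chain _ _ _ RHa (not_eq_sym HaH)) as [m1 C1].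
      destruct (reach_chain _ _ _ RaT HaT) as [m2 C2].
      apply (main _ (chain_cat _ _ _ _ _ _ C1 C2)).
      right. apply in_or_app. left. apply in_or_app. right. left. auto.
Qed.

End Paths.

Lemma NS1_of_state_inv {Proc} (S : State Proc) : state_inv S -> NS1 S.
Proof.
  intros [SI LI]. pose proof (inv_next_increasing SI) as Hinc.
  unfold NS1. repeat split;
    try solve [apply SI | apply (proj1 (LI _)) | apply (proj1 (proj2 (LI _)))].
  - intros a b Ha Hb [Pab Pba].
    destruct (reach_of_path _ _ _ Pab) as [Rab Hab], (reach_of_path _ _ _ Pba) as [Rba _].
    destruct (reach_vlt _ _ _ Hinc Rab Ha) as [_ [E1|V1]]; [congruence|].
    destruct (reach_vlt _ _ _ Hinc Rba Hb) as [_ [E2|V2]]; [congruence|].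
    exact (vlt_irrefl _ (vlt_trans _ _ _ V1 V2)).
  - intros a Ha HaT. apply path_of_reach; auto. apply (inv_reach_T SI); auto.
Qed.

Lemma NS2_of_state_inv {Proc} (S : State Proc) : state_inv S -> NS2 S.
Proof.
  intros [SI _] a. split.
  - intros Ha. destruct (mrk (sh S) a) eqn:Hm; [right; auto|left].
    apply on_main_of_reach; auto; [apply (inv_unmarked_reached SI)|apply (inv_reach_T SI)]; auto.
  - intros [[mid [_ [Ch Hin]]]|Hm]; [|apply (inv_marked_active SI); auto].
    apply (reach_vlt _ _ _ (inv_next_increasing SI) (chain_reach _ _ _ _ Ch Hin) (inv_act_H SI)).
Qed.

Lemma NS3_of_state_inv {Proc} (S : State Proc) : state_inv S -> NS3 S.
Proof.
  intros [_ LI] P. specialize (LI P).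
  unfold local_inv, is_locL2_L31, is_locL32, is_locL4, is_locL5 in *. simpl.
  destruct (lpc (loc S P)); repeat split; intros;
    repeat match goal with E : exists _, _ |- _ => destruct E end;
    repeat match goal with E : _ \/ _ |- _ => destruct E end; try discriminate; tauto.
Qed.

Lemma NS4_of_state_inv {Proc} (S : State Proc) : state_inv S -> NS4 S.
Proof.
  intros [_ LI] P. specialize (LI P). unfold local_inv in LI. simpl.
  destruct (lpc (loc S P)); simpl; intuition discriminate.
Qed.

Lemma NS5_of_state_inv {Proc} (S : State Proc) : state_inv S -> NS5 S.
Proof.
  intros [_ LI] P. specialize (LI P). unfold local_inv in LI. simpl.
  destruct (lpc (loc S P)); simpl; intuition discriminate.
Qed.

Lemma normal_of_state_inv {Proc} (S : State Proc) : state_inv S -> normal S.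
Proof.
  intros Hinv.
  exact (conj (NS1_of_state_inv S Hinv) (conj (NS2_of_state_inv S Hinv)
          (conj (NS3_of_state_inv S Hinv) (conj (NS4_of_state_inv S Hinv)
          (NS5_of_state_inv S Hinv))))).
Qed.

Lemma state_inv_history {Proc} n (S : nat -> State Proc) :
  history n S -> forall i, i <= n -> state_inv (S i).
Proof.
  intros [Hinit Hsteps] i. induction i as [|i IH]; intros Hi.
  - apply state_inv_initial, Hinit.
  - destruct (Hsteps i ltac:(lia)) as [P Hstep]. rewrite Nat.add_1_r in Hstep.
    apply state_inv_step with (S i) P; [apply IH; lia|exact Hstep].
Qed.

Theorem theorem5p9 (Proc : Type) (n : nat) (S : nat -> State Proc) :
  history n S -> forall i, i <= n -> normal (S i).
Proof.
  intros Hhist i Hi. apply normal_of_state_inv, (state_inv_history n S Hhist i Hi).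
Qed.
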